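(* If the finite symmetric two-player game $(X,\pi)$ has no finite population evolutionary stable strategy (fESS), then imitation is subject to a money pump.
   Context: A symmetric two-player game $(X,\pi)$ has common action set $X$ and payoff $\pi:X\times X\to\mathbb{R}$ ($\pi(x,y)$ = payoff of the player choosing $x$ against $y$). An action $x^*\in X$ is a fESS if $\pi(x^*,x)\ge\pi(x,x^* )$ for all $x\in X$. Relative payoff: $\Delta(x,y)=\pi(x,y)-\pi(y,x)$. Imitate-the-best: given initial $y_0\in X$ and any opponent sequence $(x_t)_{t\ge0}$, $y_t=x_{t-1}$ if $\Delta(x_{t-1},y_{t-1})>0$ and $y_t=y_{t-1}$ otherwise. Imitation is not subject to a money pump if there is $M\in\mathbb{R}_+$ such that for every $y_0\in X$ and every sequence $(x_t)$, $\limsup_{T\to\infty}\sum_{t=0}^T\Delta(x_t,y_t)\le M$; otherwise it is subject to a money pump. *)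

From Stdlib Require Import Reals.
From Coquelicot Require Import Coquelicot.
From mathcomp Require Import ssreflect ssrbool eqtype fintype.
Open Scope R_scope.

Section Game.
Context {X : finType}.
Variable pi : X -> X -> R.

Definition Delta (x y : X) : R := pi x y - pi y x.

Definition is_fESS (xs : X) : Prop := forall x : X, pi xs x >= pi x xs.

Fixpoint imitate (y0 : X) (xs : nat -> X) (t : nat) : X :=
  match t with
  | O => y0
  | S t' => let y := imitate y0 xs t' in
            if Rlt_dec 0 (Delta (xs t') y) then xs t' else y
  end.

Definition cum_rel_payoff (y0 : X) (xs : nat -> X) (T : nat) : R :=
  sum_f_R0 (fun t => Delta (xs t) (imitate y0 xs t)) T.

Definition not_money_pump : Prop :=
  exists M : R, 0 <= M /\
    forall (y0 : X) (xs : nat -> X),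
      Rbar_le (LimSup_seq (cum_rel_payoff y0 xs)) (Rbar.Finite M).

Definition subject_to_money_pump : Prop := ~ not_money_pump.
End Game.

(* Without an fESS every action y is beaten by some x, i.e. Delta(x, y) > 0;
   fix such a response f.  The opponent who always plays f(y_t) is always
   imitated, so y_{t+1} = f(y_t), and every round yields him at least the
   minimum e > 0 of Delta(f y, y) over the finite action set.  His cumulative
   relative payoff therefore grows like (T+1) e, so no bound M can exist. *)
From Pilot Require Import Defs.
From Stdlib Require Import Reals Lra ClassicalEpsilon Classical.
From Coquelicot Require Import Coquelicot.
From mathcomp Require Import ssreflect ssrbool eqtype fintype seq.
Open Scope R_scope.

Lemma finite_pos_lower_bound {X : finType} {h : X -> R} :
  (forall y, 0 < h y) -> exists e, 0 < e /\ forall y, e <= h y.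
Proof.
move=> h_pos.
suff [e [e_pos e_le]] : exists e, 0 < e /\ forall y, y \in enum X -> e <= h y.
  by exists e; split=> // y; apply: e_le; rewrite mem_enum.
elim: (enum X) => [|a l [e [e_pos e_le]]].
  by exists 1; split=> [|y]; [lra|].
exists (Rmin e (h a)); split; first by apply: Rmin_pos.
move=> y; rewrite in_cons => /orP [/eqP ->|y_l]; first exact: Rmin_r.
exact: Rle_trans (Rmin_l _ _) (e_le y y_l).
Qed.

Lemma LimSup_seq_linear_growth {u : nat -> R} {e : R} :
  0 < e -> (forall n, INR (S n) * e <= u n) -> LimSup_seq u = p_infty.
Proof.
move=> e_pos u_ge.
apply: is_LimSup_seq_unique; apply: is_lim_LimSup_seq.
apply: (is_lim_seq_le_p_loc (fun n => INR (S n) * e)).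
  by exists O => n _; apply: u_ge.
apply: (is_lim_seq_mult _ _ p_infty e).
- by apply/(is_lim_seq_incr_1 INR p_infty); exact: is_lim_seq_INR.
- exact: is_lim_seq_const.
- exact: is_Rbar_mult_p_infty_pos.
Qed.

Section ImitationPump.
Context {X : finType} {pi : X -> X -> R}.

Lemma no_fESS_improving_response :
  ~ (exists xs : X, is_fESS pi xs) ->
  exists f : X -> X, forall y, 0 < Defs.Delta pi (f y) y.
Proof.
move=> no_fESS; apply: (choice (fun y x => 0 < Defs.Delta pi x y)) => y.
apply: NNPP => no_better; apply: no_fESS; exists y => x.
apply: Rnot_lt_ge => lt_pi; apply: no_better; exists x.
rewrite /Defs.Delta; lra.
Qed.

Context {f : X -> X} (f_improves : forall y, 0 < Defs.Delta pi (f y) y).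

Lemma imitate_improving_response (y0 : X) (t : nat) :
  imitate pi y0 (fun s => f (Nat.iter s f y0)) t = Nat.iter t f y0.
Proof.
elim: t => [|t IH] //=; rewrite IH.
by case: Rlt_dec => // not_improving; case: not_improving.
Qed.

Lemma cum_rel_payoff_improving_response (y0 : X) (e : R) :
  (forall y, e <= Defs.Delta pi (f y) y) ->
  forall T, INR (S T) * e <= cum_rel_payoff pi y0 (fun s => f (Nat.iter s f y0)) T.
Proof.
move=> e_le; rewrite /cum_rel_payoff; elim=> [|T IH].
  by have := e_le y0; rewrite /=; lra.
rewrite tech5 imitate_improving_response S_INR.
by have := e_le (Nat.iter (S T) f y0); lra.
Qed.

End ImitationPump.

Theorem corollary1 (X : finType) (pi : X -> X -> R) (HX : inhabited X) :
  ~ (exists xs : X, is_fESS pi xs) -> subject_to_money_pump pi.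
Proof.
move=> no_fESS [M [_ bounded]]; case: HX => y0.
have [f f_improves] := no_fESS_improving_response no_fESS.
have [e [e_pos e_le]] := finite_pos_lower_bound f_improves.
have := bounded y0 (fun s => f (Nat.iter s f y0)).
by rewrite (LimSup_seq_linear_growth e_pos
              (cum_rel_payoff_improving_response f_improves y0 e e_le)).
Qed.
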